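(* Let $n,d\in\mathbb N$, let $\{\varepsilon_k^j\}_{1\le j\le n,\,1\le k\le d}$ be independent Rademacher random variables on a probability space $(\Omega,\Sigma,P)$, and for $z\in\mathbb C^d$, $t\in\Omega$ put $F(z,t)=\prod_{j=1}^n\sum_{k=1}^d\varepsilon_k^j(t)z_k$ and $\|F(\cdot,t)\|=\sup_{\|u\|_\infty=1}|F(u,t)|$. Then for every $R>0$, $$P(\|F(\cdot,t)\|>2R)<(24n)^d\,\frac{d^n}{R^2}.$$
   Context: A Rademacher random variable takes values $1$ and $-1$ each with probability $1/2$. $\|\cdot\|_\infty$ is the sup norm on $\mathbb C^d$. *)

From HB Require Import structures.
From mathcomp Require Import all_boot all_order all_algebra.
From mathcomp Require Import all_classical all_reals all_analysis.
From mathcomp Require Import complex.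
Set Implicit Arguments. Unset Strict Implicit. Unset Printing Implicit Defensive.
Import Order.TTheory GRing.Theory Num.Theory.
Local Open Scope classical_set_scope.
Local Open Scope ring_scope.

Definition mutually_independent {d} {T : measurableType d} {R : realType}
  (P : probability T R) (I : finType) (X : I -> T -> R) : Prop :=
  forall (J : {set I}) (B : I -> set R), (forall i, measurable (B i)) ->
    P (\bigcap_(i in [set i | i \in J]) (X i @^-1` B i)) =
    (\prod_(i in J) P (X i @^-1` B i))%E.

Definition rademacher {d} {T : measurableType d} {R : realType}
  (P : probability T R) (X : T -> R) : Prop :=
  P (X @^-1` [set 1]) = (2^-1)%:E /\ P (X @^-1` [set -1]) = (2^-1)%:E.

Definition supnormC {R : realType} {d : nat} (u : 'I_d -> R[i]) : R :=
  \big[Num.max/0]_(k < d) ComplexField.Normc.normc (u k).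

Definition Fpoly {T : Type} {R : realType} {n d : nat}
  (eps : 'I_n -> 'I_d -> T -> R) (z : 'I_d -> R[i]) (t : T) : R[i] :=
  \prod_(j < n) \sum_(k < d) (real_complex R (eps j k t) * z k).

Definition Fnorm {T : Type} {R : realType} {n d : nat}
  (eps : 'I_n -> 'I_d -> T -> R) (t : T) : R :=
  sup [set ComplexField.Normc.normc (Fpoly eps u t) | u in [set u : 'I_d -> R[i] | supnormC u = 1]].

From HB Require Import structures.
From mathcomp Require Import all_boot all_order all_algebra.
From mathcomp Require Import all_classical all_reals all_analysis.
From mathcomp Require Import complex measurable_realfun.
From mathcomp Require Import lra zify.
Import Order.TTheory GRing.Theory Num.Theory.
Import ComplexField.Normc.
Local Open Scope classical_set_scope.
Local Open Scope ring_scope.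
Local Open Scope complex_scope.

(* Once the signs s = (eps_k^j(t)) in {-1,1}^(n x d) are fixed, an event of probability
   2^-(nd), F(., t) is the polynomial sum_a c_a(s) z^a over the at most (n+1)^d multi-indices
   a of degree n, so ||F(., t)|| <= sum_a |c_a(s)| and, by Cauchy-Schwarz,
   ||F(., t)||^2 <= (n+1)^d sum_a c_a(s)^2.  The Walsh products prod_j s_(j, f j) are
   orthogonal over the patterns, hence sum_s sum_a c_a(s)^2 = 2^(nd) d^n, and Chebyshev's
   counting bounds the proportion of patterns with ||F|| > 2R by (n+1)^d d^n / (4 R^2),
   which is below (24 n)^d d^n / R^2.  The event is measurable because the supremum over
   the polydisc is already reached on its countably many Gaussian-rational points, F being
   Lipschitz there. *)
Section complex_norm.
Context {R : rcfType}.
Implicit Types (z : R[i]) (x : R).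

Lemma normc_normr z : `|z| = (normc z)%:C.
Proof. by []. Qed.

Lemma lec_normc z x : (`|z| <= x%:C) = (normc z <= x).
Proof. by rewrite normc_normr lecR. Qed.

Lemma normc_real x : normc x%:C = `|x|.
Proof. by rewrite /normc /= expr0n addr0 sqrtr_sqr. Qed.

Lemma normr_real x : `|x%:C| = `|x|%:C.
Proof. by rewrite normc_normr normc_real. Qed.

Lemma normc_prod (I : Type) (r : seq I) (F : I -> R[i]) :
  normc (\prod_(i <- r) F i) = \prod_(i <- r) normc (F i).
Proof. exact: (big_morph _ (@normcM R) (@normc1 R)). Qed.

Lemma Re_sum (I : Type) (r : seq I) (F : I -> R[i]) :
  complex.Re (\sum_(i <- r) F i) = \sum_(i <- r) complex.Re (F i).
Proof. by apply: big_morph => [[a b] [c d]|]. Qed.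

Lemma Im_sum (I : Type) (r : seq I) (F : I -> R[i]) :
  complex.Im (\sum_(i <- r) F i) = \sum_(i <- r) complex.Im (F i).
Proof. by apply: big_morph => [[a b] [c d]|]. Qed.

Lemma Re_realM x z : complex.Re (x%:C * z) = x * complex.Re z.
Proof. by case: z => a b /=; rewrite mul0r subr0. Qed.

Lemma Im_realM x z : complex.Im (x%:C * z) = x * complex.Im z.
Proof. by case: z => a b /=; rewrite mul0r addr0. Qed.

Lemma normc_ReIm z : normc z = Num.sqrt (complex.Re z ^+ 2 + complex.Im z ^+ 2).
Proof. by case: z. Qed.

Lemma normc_ge0 z : 0 <= normc z.
Proof. by rewrite normc_ReIm sqrtr_ge0. Qed.

Lemma normc_le_ReIm z : normc z <= `|complex.Re z| + `|complex.Im z|.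
Proof.
set a := complex.Re z; set b := complex.Im z.
have -> : `|a| + `|b| = Num.sqrt ((`|a| + `|b|) ^+ 2).
  by rewrite sqrtr_sqr (ger0_norm (addr_ge0 (normr_ge0 a) (normr_ge0 b))).
rewrite normc_ReIm; apply: ler_wsqrtr; rewrite sqrrD !real_normK ?num_real //.
by rewrite -addrA lerD2l lerDr mulrn_wge0 // mulr_ge0.
Qed.

Lemma normc_le_ReIm_mono z w :
  `|complex.Re z| <= `|complex.Re w| -> `|complex.Im z| <= `|complex.Im w| ->
  normc z <= normc w.
Proof.
have sqr_le (x y : R) : `|x| <= `|y| -> x ^+ 2 <= y ^+ 2.
  by rewrite -(real_normK (num_real x)) -(real_normK (num_real y)) ler_sqr.
by move=> Rez Imz; rewrite !normc_ReIm; apply/ler_wsqrtr/lerD; exact: sqr_le.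
Qed.

End complex_norm.

Section unit_polydisc.
Context {R : realType} {d : nat}.
Implicit Types u : 'I_d -> R[i].

Definition polydisc u := forall k, `|u k| <= 1.

Lemma normc_le_supnormC u k : normc (u k) <= supnormC u.
Proof. exact: (le_bigmax _ (fun k => normc (u k))). Qed.

Lemma supnormC_le u (x : R) :
  0 <= x -> (forall k, normc (u k) <= x) -> supnormC u <= x.
Proof. by move=> x0 ux; apply: bigmax_le => // k _; exact: ux. Qed.

Lemma supnormC_eq1_polydisc u : supnormC u = 1 -> polydisc u.
Proof. by move=> u1 k; rewrite lec_normc -u1 normc_le_supnormC. Qed.

Lemma supnormC1 : (0 < d)%N -> supnormC (fun _ : 'I_d => 1 : R[i]) = 1.
Proof.
move=> d_gt0; apply/le_anti/andP; split.
  by apply: supnormC_le => // k; rewrite normc1.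
by have := normc_le_supnormC (fun=> 1) (Ordinal d_gt0); rewrite normc1.
Qed.

Lemma polydisc_scale_sphere u : (0 < d)%N -> polydisc u ->
  exists (c : R) v, [/\ 0 <= c <= 1, supnormC v = 1 & u = fun k => c%:C * v k].
Proof.
move=> d_gt0 ud; have [k0 _ uk0] := eq_bigmax (Ordinal d_gt0) predT
  (fun k => normc (u k)) isT (fun k _ => normc_ge0 (u k)).
have c0 : 0 <= supnormC u by rewrite /supnormC uk0 normc_ge0.
have c1 : supnormC u <= 1 by apply: supnormC_le => // k; rewrite -lec_normc.
have [u0|u_neq0] := eqVneq (supnormC u) 0.
  exists 0, (fun=> 1); split; rewrite ?lexx ?ler01 ?supnormC1 //.
  apply/funext => k; rewrite rmorph0 mul0r; apply: eq0_normc; apply/le_anti.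
  by rewrite normc_ge0 -u0 normc_le_supnormC.
exists (supnormC u), (fun k => (supnormC u)^-1%:C * u k); split.
- by rewrite c0 c1.
- apply/le_anti/andP; split.
    apply: supnormC_le => // k; rewrite normcM normc_real ger0_norm ?invr_ge0 //.
    by rewrite ler_pdivrMl ?lt_def ?u_neq0 // mulr1 normc_le_supnormC.
  apply: le_trans (normc_le_supnormC _ k0).
  by rewrite normcM normc_real ger0_norm ?invr_ge0 // -uk0 mulVf.
- by apply/funext => k; rewrite mulrA -rmorphM divff ?mul1r.
Qed.

End unit_polydisc.

Lemma ler_norm_prodB {V : numDomainType} {m} (a b : 'I_m -> V) (M : V) :
  0 <= M -> (forall j, `|a j| <= M) -> (forall j, `|b j| <= M) ->
  `|\prod_j a j - \prod_j b j| <= M ^+ m.-1 * \sum_j `|a j - b j|.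
Proof.
move=> M0; elim: m a b => [|m IH] a b aM bM.
  by rewrite !big_ord0 subrr normr0 ?mul0r ?mulr0.
rewrite !big_ord_recr /=.
set A := \prod_(i < m) _; set B := \prod_(i < m) _.
have -> : A * a ord_max - B * b ord_max =
    (A - B) * a ord_max + B * (a ord_max - b ord_max).
  by rewrite mulrBl mulrBr addrA subrK.
have BM : `|B| <= M ^+ m.
  rewrite normr_prod (_ : M ^+ m = \prod_(j < m) M); last first.
    by rewrite prodr_const card_ord.
  by apply: ler_prod => j _; rewrite normr_ge0 bM.
apply: le_trans (ler_normD _ _) _; rewrite !normrM mulrDr.
apply: lerD; last by apply: ler_pM.
apply: le_trans (ler_pM (normr_ge0 _) (normr_ge0 _) (IH _ _ (fun j => aM _)
  (fun j => bM _)) (aM ord_max)) _.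
clear A B BM IH; rewrite mulrAC; case: m a b aM bM => [|m] a b _ _.
  by rewrite big_ord0 !mulr0.
by rewrite -exprSr.
Qed.

Section linear_form_product.
Context {R : realType} {n d : nat}.
Implicit Types (e : 'I_n -> 'I_d -> R) (u v : 'I_d -> R[i]).

(* [Fpoly eps u t] and [Fnorm eps t] are, by conversion, [lfprod] and [lfnorm] of the
   matrix [fun j k => eps j k t]. *)
Definition lfprod e u : R[i] := \prod_(j < n) \sum_(k < d) (e j k)%:C * u k.

Definition lfnorm e : R :=
  sup [set normc (lfprod e u) | u in [set u | supnormC u = 1]].

Lemma lfprodZ e (c : R[i]) u :
  lfprod e (fun k => c * u k) = c ^+ n * lfprod e u.
Proof.
rewrite /lfprod -[in c ^+ n](card_ord n) -prodr_const -big_split /=.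
by apply: eq_bigr => j _; rewrite mulr_sumr; apply: eq_bigr => k _; rewrite mulrCA.
Qed.

Lemma lfprod_expand e u : lfprod e u =
  \sum_(f : {ffun 'I_n -> 'I_d}) (\prod_j e j (f j))%:C * \prod_j u (f j).
Proof.
rewrite /lfprod bigA_distr_bigA /=; apply: eq_bigr => f _.
by rewrite big_split /= rmorph_prod.
Qed.

Definition mdeg (f : {ffun 'I_n -> 'I_d}) : {ffun 'I_d -> 'I_n.+1} :=
  [ffun k => inord #|[pred j | f j == k]|].

Definition lfcoef e (a : {ffun 'I_d -> 'I_n.+1}) : R :=
  \sum_(f | mdeg f == a) \prod_j e j (f j).

Lemma prod_mdeg (f : {ffun 'I_n -> 'I_d}) u :
  \prod_j u (f j) = \prod_k u k ^+ mdeg f k.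
Proof.
rewrite (partition_big f predT) //=; apply: eq_bigr => k _.
rewrite (eq_bigr (fun=> u k)); last by move=> j /eqP ->.
rewrite prodr_const /mdeg ffunE inordK // ltnS.
by apply: leq_trans (max_card _) _; rewrite card_ord.
Qed.

Lemma lfprod_coef e u :
  lfprod e u = \sum_a (lfcoef e a)%:C * \prod_k u k ^+ a k.
Proof.
rewrite lfprod_expand (partition_big mdeg predT) //=; apply: eq_bigr => a _.
rewrite /lfcoef rmorph_sum mulr_suml; apply: eq_bigr => f /eqP <-.
by rewrite prod_mdeg.
Qed.

Lemma normc_lfprod_le_coef e u :
  polydisc u -> normc (lfprod e u) <= \sum_a `|lfcoef e a|.
Proof.
move=> ud; rewrite -lec_normc lfprod_coef rmorph_sum.
apply: le_trans (ler_norm_sum _ _ _) _; apply: ler_sum => a _ /=.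
rewrite normrM -normr_real ler_piMr ?normr_ge0 // normr_prod.
by apply: prodr_ile1 => k _; rewrite normr_ge0 normrX exprn_ile1.
Qed.

Lemma norm_linform_le (x : 'I_d -> R) (w : 'I_d -> R[i]) (c : R) :
  (forall k, `|w k| <= c%:C) ->
  `|\sum_k (x k)%:C * w k| <= ((\sum_k `|x k|) * c)%:C.
Proof.
move=> wc; apply: le_trans (ler_norm_sum _ _ _) _.
rewrite mulr_suml rmorph_sum; apply: ler_sum => k _.
by rewrite normrM normr_real rmorphM ler_wpM2l // -normr_real.
Qed.

Lemma normc_lfprodB_le e u v (δ : R) :
  polydisc u -> polydisc v -> (forall k, `|u k - v k| <= δ%:C) ->
  normc (lfprod e u - lfprod e v) <=
    (\sum_j \sum_k `|e j k|) ^+ n.-1 * ((\sum_j \sum_k `|e j k|) * δ).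
Proof.
move=> ud vd uvδ; have M0 : 0 <= \sum_j \sum_k `|e j k|.
  by apply: sumr_ge0 => j _; exact: sumr_ge0.
have formM w : polydisc w ->
    forall j, `|\sum_k (e j k)%:C * w k| <= (\sum_j \sum_k `|e j k|)%:C.
  move=> wd j; apply: le_trans (norm_linform_le _ _ 1 wd) _.
  rewrite mulr1 lecR (bigD1 j) //= lerDl.
  by apply: sumr_ge0 => i _; exact: sumr_ge0.
rewrite -lec_normc.
apply: le_trans (ler_norm_prodB _ _ _ _ (formM _ ud) (formM _ vd)) _.
  by rewrite lecR.
rewrite rmorphM rmorphXn ler_wpM2l ?exprn_ge0 ?lecR //.
rewrite mulr_suml rmorph_sum; apply: ler_sum => j _.
by rewrite -sumrB; under eq_bigr do rewrite -mulrBr; exact: norm_linform_le.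
Qed.

Hypothesis d_gt0 : (0 < d)%N.

Lemma has_sup_lfnorm e :
  has_sup [set normc (lfprod e u) | u in [set u | supnormC u = 1]].
Proof.
split; first by exists (normc (lfprod e (fun=> 1))), (fun=> 1); rewrite //= supnormC1.
exists (\sum_a `|lfcoef e a|) => _ [u /= u1 <-].
exact/normc_lfprod_le_coef/supnormC_eq1_polydisc.
Qed.

Lemma lfnorm_le_coef e : lfnorm e <= \sum_a `|lfcoef e a|.
Proof.
apply: ge_sup; first exact: (has_sup_lfnorm e).1.
by move=> _ [u /= u1 <-]; exact/normc_lfprod_le_coef/supnormC_eq1_polydisc.
Qed.

Lemma normc_lfprod_le_lfnorm e u : polydisc u -> normc (lfprod e u) <= lfnorm e.
Proof.
move=> ud; have [c [v [/andP[c0 c1] v1 ->]]] := polydisc_scale_sphere _ d_gt0 ud.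
rewrite lfprodZ normcM -rmorphXn normc_real ger0_norm ?exprn_ge0 //.
apply: le_trans (_ : normc (lfprod e v) <= _); last first.
  by apply: sup_upper_bound (has_sup_lfnorm e) _ _; exists v.
by rewrite ler_piMl ?normc_ge0 ?exprn_ile1.
Qed.

End linear_form_product.

Section rational_approximation.
Variable R : realType.

Lemma ratr_approx (x δ : R) : 0 < δ ->
  exists r : rat, `|ratr r| <= `|x| /\ `|x - ratr r| < δ.
Proof.
move=> δ0; wlog x0 : x / 0 <= x.
  move=> approx; have [/approx//|/ltW x_le0] := leP 0 x.
  have /approx[r [rx xr]] : 0 <= - x by rewrite oppr_ge0.
  rewrite normrN in rx; rewrite -opprD normrN in xr.
  by exists (- r); rewrite rmorphN normrN opprK.
have [xδ|δx] := ltP x δ.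
  by exists 0; rewrite rmorph0 normr0 subr0 normr_ge0 ger0_norm.
have /rat_in_itvoo[r] : x - δ < x by rewrite gtrBl.
rewrite in_itv /= => /andP[xδr rx]; exists r.
by rewrite !ger0_norm ?subr_ge0; lra.
Qed.

Definition ratC (p : rat * rat) : R[i] := ratr p.1 +i* ratr p.2.

Lemma ratC_approx (z : R[i]) (δ : R) : 0 < δ ->
  exists p, `|ratC p| <= `|z| /\ `|z - ratC p| <= δ%:C.
Proof.
move=> δ0; have δ20 : 0 < δ / 2 by rewrite divr_gt0.
have [a [az za]] := ratr_approx (complex.Re z) _ δ20.
have [b [bz zb]] := ratr_approx (complex.Im z) _ δ20.
exists (a, b); rewrite !normc_normr !lecR; split; first exact: normc_le_ReIm_mono.
apply: le_trans (normc_le_ReIm _) _; case: z {az bz} za zb => x y /= xa yb.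
by rewrite [δ]splitr lerD // ltW.
Qed.

End rational_approximation.

Section lfnorm_rational.
Context {R : realType} {n d : nat}.
Hypothesis d_gt0 : (0 < d)%N.

Lemma lfnorm_gt_ratP (e : 'I_n -> 'I_d -> R) (a : R) :
  a < lfnorm e <-> exists p : {ffun 'I_d -> rat * rat},
    polydisc (fun k => ratC R (p k)) /\
    a < normc (lfprod e (fun k => ratC R (p k))).
Proof.
split=> [a_lt|[p [pd ap]]]; last exact: lt_le_trans ap (normc_lfprod_le_lfnorm d_gt0 _ _ pd).
have /sup_adherent/(_ (has_sup_lfnorm d_gt0 e))[_ [u /= u1 <-]] : 0 < lfnorm e - a.
  by rewrite subr_gt0.
rewrite opprB addrC subrK => au; set η := normc (lfprod e u) - a.
have η0 : 0 < η by rewrite subr_gt0.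
set M := \sum_j \sum_k `|e j k|; set K := M ^+ n.-1 * M.
have K0 : 0 <= K by rewrite mulr_ge0 ?exprn_ge0 // sumr_ge0 // => j _; exact: sumr_ge0.
set δ := η / (K + 1); have δ0 : 0 < δ by rewrite divr_gt0 // ltr_wpDl.
have /fin_all_exists[f uf] : forall k, exists p,
    `|ratC R p| <= `|u k| /\ `|u k - ratC R p| <= δ%:C.
  by move=> k; exact: ratC_approx.
exists (finfun f); set q := fun k => _.
have -> : q = fun k => ratC R (f k) by apply/funext => k; rewrite /q ffunE.
have ud := supnormC_eq1_polydisc _ u1.
have qd : polydisc (fun k => ratC R (f k)) by move=> k; apply: le_trans (ud k); case: (uf k).
split=> //.
have uq := normc_lfprodB_le e _ _ _ ud qd (fun k => (uf k).2).
rewrite -/M mulrA -/K in uq.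
have Kδ : K * δ < η.
  by rewrite /δ mulrA ltr_pdivrMr ?ltr_wpDl // mulrC ltr_pM2l // ltrDl.
have := le_normcD (lfprod e u - lfprod e (fun k => ratC R (f k)))
  (lfprod e (fun k => ratC R (f k))).
rewrite subrK /η in Kδ *; lra.
Qed.

End lfnorm_rational.

Section lfnorm_measurable.
Context {dT : measure_display} {T : measurableType dT} {R : realType} {n d : nat}.
Variable e : 'I_n -> 'I_d -> T -> R.
Hypothesis me : forall j k, measurable_fun setT (e j k).

Lemma measurable_normc_lfprod (q : 'I_d -> R[i]) :
  measurable_fun setT (fun t => normc (lfprod (fun j k => e j k t) q)).
Proof.
under eq_fun do rewrite /lfprod normc_prod.
apply: measurable_prod => j _.
under eq_fun do rewrite normc_ReIm Re_sum Im_sum.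
apply: measurableT_comp (continuous_measurable_fun (@sqrt_continuous R)) _.
apply: measurable_funD; apply: measurable_funX; apply: measurable_sum => k.
  by under eq_fun do rewrite Re_realM; exact: measurable_funM.
by under eq_fun do rewrite Im_realM; exact: measurable_funM.
Qed.

Lemma measurable_lfnorm_gt (a : R) : (0 < d)%N ->
  measurable [set t | a < lfnorm (fun j k => e j k t)].
Proof.
move=> d_gt0; pose q (p : {ffun 'I_d -> rat * rat}) k := ratC R (p k).
rewrite (_ : [set t | _] = \bigcup_p
    [set t | polydisc (q p) /\ a < normc (lfprod (fun j k => e j k t) (q p))]).
  apply: (@countable_bigcupT_measurable _ T); first exact: countableP.
  move=> p.
  have [pd|npd] := pselect (polydisc (q p)); last first.
    by rewrite (_ : [set t | _] = set0) //; apply/seteqP; split=> t // [].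
  rewrite (_ : [set t | _] =
      (fun t => normc (lfprod (fun j k => e j k t) (q p))) @^-1` `]a, +oo[).
    by rewrite -[X in measurable X]setTI; exact: measurable_normc_lfprod.
  by rewrite preimage_itvoy; apply/seteqP; split=> t /= => [[]|].
apply/seteqP; split=> t /= => [/(lfnorm_gt_ratP d_gt0)[p]|[p _]]; first by exists p.
by move=> ?; apply/(lfnorm_gt_ratP d_gt0); exists p.
Qed.

End lfnorm_measurable.

Lemma sqr_sum_le {R : realDomainType} {I : finType} (x : I -> R) :
  (\sum_i x i) ^+ 2 <= #|I|%:R * \sum_i x i ^+ 2.
Proof.
rewrite -(ler_pMn2r (_ : 0 < 2)%N) // expr2 mulr_suml -sumrMnl.
have -> : (#|I|%:R * \sum_i x i ^+ 2) *+ 2 = \sum_i \sum_j (x i ^+ 2 + x j ^+ 2).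
  under [RHS]eq_bigr do rewrite big_split sumr_const /=.
  by rewrite big_split /= sumr_const sumrMnl mulr2n mulr_natl.
apply: ler_sum => i _; rewrite mulr_sumr -sumrMnl; apply: ler_sum => j _.
by rewrite -subr_ge0 addrAC -sqrrB sqr_ge0.
Qed.

Lemma sum_signs_prod (R : comPzRingType) (I : finType) (m : I -> nat) :
  \sum_(s : {ffun I -> bool}) \prod_i ((-1) ^+ s i) ^+ m i =
  \prod_i (1 + (-1) ^+ m i) :> R.
Proof.
rewrite -(bigA_distr_bigA (fun i (b : bool) => ((-1) ^+ b) ^+ m i : R)) /=.
by apply: eq_bigr => i _; rewrite big_bool /= expr1n addrC.
Qed.

Lemma prod_sign_graph (R : comPzRingType) n d (s : {ffun 'I_n * 'I_d -> bool})
    (f : {ffun 'I_n -> 'I_d}) :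
  \prod_j (-1) ^+ s (j, f j) = \prod_i ((-1) ^+ s i) ^+ (f i.1 == i.2) :> R.
Proof.
rewrite (eq_bigr (fun i => ((-1) ^+ s (i.1, i.2)) ^+ (f i.1 == i.2))); last by case.
rewrite -(pair_bigA _ (fun j k => ((-1) ^+ s (j, k)) ^+ (f j == k))) /=.
apply: eq_bigr => j _.
rewrite (bigD1 (f j)) //= eqxx big1 ?mulr1 // => k kf.
by rewrite eq_sym (negbTE kf).
Qed.

Lemma walsh_orthogonal (R : comPzRingType) n d (f g : {ffun 'I_n -> 'I_d}) :
  \sum_(s : {ffun 'I_n * 'I_d -> bool})
      (\prod_j (-1) ^+ s (j, f j)) * (\prod_j (-1) ^+ s (j, g j)) =
  (f == g)%:R * 2 ^+ (n * d) :> R.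
Proof.
under eq_bigr do rewrite !prod_sign_graph -big_split /=.
under eq_bigr do under eq_bigr do rewrite -exprD.
rewrite sum_signs_prod; have [<-|fg] := eqVneq f g.
  under eq_bigr do rewrite exprD -expr2 sqrr_sign.
  by rewrite prodr_const card_prod !card_ord mul1r.
have /existsP[j fgj] : [exists j, f j != g j].
  by apply: contraNT fg => /existsPn fg; apply/eqP/ffunP => j; exact/eqP/negPn/fg.
rewrite (bigD1 (j, f j)) //= eqxx eq_sym (negbTE fgj) addn0 expr1 subrr.
by rewrite !mul0r.
Qed.

Definition sign_matrix (R : pzRingType) {n d} (s : {ffun 'I_n * 'I_d -> bool}) :
  'I_n -> 'I_d -> R := fun j k => (-1) ^+ s (j, k).

Lemma sum_sqr_lfcoef_sign (R : realType) n d :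
  \sum_(s : {ffun 'I_n * 'I_d -> bool}) \sum_a lfcoef (sign_matrix R s) a ^+ 2 =
  2 ^+ (n * d) * d%:R ^+ n.
Proof.
rewrite exchange_big /=.
transitivity (\sum_(f : {ffun 'I_n -> 'I_d}) (2 ^+ (n * d) : R)); last first.
  by rewrite sumr_const card_ffun !card_ord -(natrX R d n) mulr_natr.
rewrite [RHS](partition_big mdeg predT) //=; apply: eq_bigr => a _; rewrite /lfcoef.
under eq_bigr do rewrite expr2 mulr_suml.
rewrite exchange_big /=; apply: eq_bigr => f fa.
under eq_bigr do rewrite mulr_sumr.
rewrite exchange_big /=; under eq_bigr do rewrite walsh_orthogonal.
rewrite (bigD1 f) //= eqxx mul1r big1 ?addr0 // => g /andP[_ gf].
by rewrite eq_sym (negbTE gf) mul0r.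
Qed.

Lemma card_lfnorm_gt_sign {R : realType} {n d} {a : R} : (0 < d)%N -> 0 < a ->
  #|[pred s : {ffun 'I_n * 'I_d -> bool} | a < lfnorm (sign_matrix R s)]|%:R
    / 2 ^+ (n * d) <= (n.+1 ^ d)%:R * d%:R ^+ n / a ^+ 2.
Proof.
move=> d_gt0 a_gt0; set P := [pred s | _].
rewrite ler_pdivrMr ?exprn_gt0 // mulrAC ler_pdivlMr ?exprn_gt0 // -mulrA.
have -> : #|P|%:R * a ^+ 2 = \sum_(s in P) a ^+ 2 by rewrite sumr_const mulr_natl.
rewrite [_ * 2 ^+ _]mulrC -sum_sqr_lfcoef_sign mulr_sumr big_mkcond /=.
apply: ler_sum => s _; case: ifP => [|_]; last first.
  by rewrite mulr_ge0 // sumr_ge0 // => b _; exact: sqr_ge0.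
rewrite inE => a_lt.
apply: le_trans (_ : _ <= (\sum_b `|lfcoef (sign_matrix R s) b|) ^+ 2) _.
  rewrite ler_sqr ?nnegrE ?(ltW a_gt0) //; last exact: sumr_ge0.
  exact: le_trans (ltW a_lt) (lfnorm_le_coef d_gt0 _).
apply: le_trans (sqr_sum_le _) _.
rewrite card_ffun !card_ord natrX ler_wpM2l ?exprn_ge0 //.
by rewrite (eq_bigr (fun b => lfcoef (sign_matrix R s) b ^+ 2)) // => b _;
  rewrite real_normK ?num_real.
Qed.

Section sign_atoms.
Context {dT : measure_display} {T : measurableType dT} {R : realType}.
Variables (P : probability T R) (I : finType) (X : I -> T -> R).
Hypothesis mX : forall i, measurable_fun setT (X i).
Hypothesis X_indep : mutually_independent P X.
Hypothesis X_rad : forall i, rademacher P (X i).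

Definition sign_atom (s : {ffun I -> bool}) : set T :=
  [set t | forall i, X i t = (-1) ^+ s i].

Lemma sign_atomE s : sign_atom s =
  \bigcap_(i in [set i | i \in [set: I]%SET]) (X i @^-1` [set (-1) ^+ s i]).
Proof.
apply/seteqP; split=> t st i; first by move=> _; exact: st.
by apply: st; rewrite /= inE.
Qed.

Lemma measurable_sign_atom s : measurable (sign_atom s).
Proof.
rewrite sign_atomE; apply: fin_bigcap_measurable => [|i _]; first exact: finite_finset.
by rewrite -[X in measurable X]setTI; exact: mX.
Qed.

Lemma sign_atom_trivIset : trivIset setT sign_atom.
Proof.
move=> s s' _ _ [t [st s't]]; apply/ffunP => i.
by apply: (@signr_inj R); rewrite /= -(st i) -(s't i).
Qed.

Lemma probability_sign_atom s : P (sign_atom s) = ((2 ^+ #|I|)^-1)%:E.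
Proof.
rewrite sign_atomE X_indep => [|i]; last exact: measurable_set1.
rewrite (eq_bigr (fun=> (2^-1)%:E)) => [|i _]; last first.
  by have [] := X_rad i; case: (s i).
by rewrite prodEFin prodr_const cardsT exprVn.
Qed.

Lemma probability_bigcup_sign_atom (B : {pred {ffun I -> bool}}) :
  P (\bigcup_(s in [set` B]) sign_atom s) = (#|B|%:R / 2 ^+ #|I|)%:E.
Proof.
rewrite measure_fin_bigcup //; last 2 first.
- exact: sub_trivIset sign_atom_trivIset.
- by move=> s _; exact: measurable_sign_atom.
rewrite (fsbigE (enum B)) ?enum_uniq //; last 2 first.
- by move=> s; rewrite /= mem_enum.
- by move=> s Bs; rewrite mem_enum => /negP[].
rewrite (eq_bigr (fun=> ((2 ^+ #|I|)^-1)%:E)) => [|s _]; last exact: probability_sign_atom.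
rewrite sumEFin big_enum_cond (eq_bigl B) => [|s]; last by rewrite mem_setE andbb.
by rewrite sumr_const mulr_natl.
Qed.

Lemma probability_le_card_sign_patterns (S : set T) (B : {pred {ffun I -> bool}}) :
  measurable S -> (forall s t, sign_atom s t -> S t -> B s) ->
  (P S <= (#|B|%:R / 2 ^+ #|I|)%:E)%E.
Proof.
move=> mS SB; rewrite -probability_bigcup_sign_atom.
set V := \bigcup_(s in _) _.
set U := \bigcup_(s in [set` (predT : {pred {ffun I -> bool}})]) sign_atom s.
have mV : measurable V.
  by apply: fin_bigcup_measurable => // s _; exact: measurable_sign_atom.
have mU : measurable U.
  by apply: fin_bigcup_measurable => // s _; exact: measurable_sign_atom.
have PU : P U = 1%E.
  rewrite probability_bigcup_sign_atom (eq_card (B := {ffun I -> bool})) //.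
  by rewrite card_ffun card_bool natrX divff // expf_neq0.
have PnU : P (~` U) = 0%E by rewrite probability_setC // PU subee.
apply: (@le_trans _ _ (P (V `|` ~` U))).
  apply: le_measure; rewrite ?inE //; first exact: measurableU mV (measurableC mU).
  move=> t St; have [[s _ st]|nUt] := pselect (U t); last by right.
  by left; exists s => //; exact: SB st St.
apply: (@le_trans _ _ (P V + P (~` U))%E); first by apply: measureU2 => //; exact: measurableC.
by rewrite PnU adde0.
Qed.

End sign_atoms.

Lemma counting_bound_lt {R : realType} {n d} {r : R} :
  (0 < n)%N -> (0 < d)%N -> 0 < r ->
  (n.+1 ^ d)%:R * d%:R ^+ n / (2 * r) ^+ 2 < (24 * n%:R) ^+ d * d%:R ^+ n / r ^+ 2.
Proof.
move=> n_gt0 d_gt0 r_gt0; have D_gt0 : 0 < d%:R ^+ n :> R by rewrite exprn_gt0 ?ltr0n.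
rewrite exprMn invfM mulrA ltr_pM2r ?invr_gt0 ?exprn_gt0 // ltr_pdivrMr ?exprn_gt0 //.
apply: le_lt_trans (_ : _ <= (24 * n%:R) ^+ d * d%:R ^+ n) _.
  by rewrite ler_pM2r // natrX lerXn2r ?nnegrE // -natrM ler_nat; lia.
have n24_gt0 : 0 < 24 * n%:R :> R by rewrite mulr_gt0 ?ltr0n.
by rewrite ltr_pMr ?mulr_gt0 ?exprn_gt0 ?ltr0n // -natrX ltr1n.
Qed.

Theorem lemma3p5 (dT : measure_display) (T : measurableType dT) (R : realType)
  (P : probability T R) (n d : nat) (hn : (0 < n)%N) (hd : (0 < d)%N)
  (eps : 'I_n -> 'I_d -> {RV P >-> R})
  (hind : mutually_independent P (fun jk : 'I_n * 'I_d => (eps jk.1 jk.2 : T -> R)))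
  (hrad : forall j k, rademacher P (eps j k))
  (Rr : R) (hR : 0 < Rr) :
  (P [set t | (2 * Rr < Fnorm (fun j k => (eps j k : T -> R)) t)%R]
    < ((24 * n%:R) ^+ d * d%:R ^+ n / Rr ^+ 2)%:E)%E.
Proof.
pose X jk := (eps jk.1 jk.2 : T -> R).
have mX jk : measurable_fun setT (X jk) by exact: measurable_funP.
have R2_gt0 : 0 < 2 * Rr by rewrite mulr_gt0.
have P_le := probability_le_card_sign_patterns P _ X mX hind (fun jk => hrad jk.1 jk.2).
apply: le_lt_trans (P_le _ [pred s | 2 * Rr < lfnorm (sign_matrix R s)] _ _) _.
- by apply: measurable_lfnorm_gt hd => j k; exact: mX (j, k).
- move=> s t st; rewrite inE /=; suff -> : sign_matrix R s = fun j k => eps j k t by [].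
  by apply/funext => j; apply/funext => k; exact: esym (st (j, k)).
rewrite card_prod !card_ord lte_fin.
exact: le_lt_trans (card_lfnorm_gt_sign hd R2_gt0) (counting_bound_lt hn hd hR).
Qed.
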